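(* Let $X$ be a Polish space and $\mathcal{B}$ a countable base of its topology which is closed under finite intersections and contains $X$. The following are equivalent: (i) there is a monotone Borel hull operation on $\mathcal{M}$ with respect to $\mathcal{M}$; (ii) there is a $\mathcal{B}$-regular monotone Borel hull operation on $\mathcal{M}$ with respect to $\mathcal{M}$; (iii) there is a monotone Borel hull operation on $\mathtt{Baire}$ with respect to $\mathcal{M}$.
   Context: $\mathcal{M}$ is the $\sigma$-ideal of meager subsets of $X$, and $\mathtt{Baire}$ is the $\sigma$-algebra of subsets of $X$ with the Baire property. For a family $\mathcal{F}$ of subsets of $X$, a Borel hull operation on $\mathcal{F}$ with respect to $\mathcal{M}$ is a map $\psi$ from $\mathcal{F}$ to the Borel subsets of $X$ such that $A\subseteq\psi(A)$ and $\psi(A)\setminus A\in\mathcal{M}$ for every $A\in\mathcal{F}$. It is monotone if $\psi(A_1)\subseteq\psi(A_2)$ whenever $A_1\subseteq A_2$ are in $\mathcal{F}$. A monotone Borel hull operation $\varphi$ on $\mathcal{M}$ (so $\varphi(A)$ is a Borel meager set for each $A\in\mathcal{M}$) is $\mathcal{B}$-regular if $\varphi(A)\cap U\subseteq\varphi(A\cap U)$ for all $A\in\mathcal{M}$ and $U\in\mathcal{B}$. *)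

From Stdlib Require Import Reals.
Open Scope R_scope.

Definition subset {X : Type} (A B : X -> Prop) : Prop := forall x, A x -> B x.
Definition inter {X : Type} (A B : X -> Prop) : X -> Prop := fun x => A x /\ B x.
Definition setminus {X : Type} (A B : X -> Prop) : X -> Prop := fun x => A x /\ ~ B x.
Definition symdiff {X : Type} (A B : X -> Prop) : X -> Prop :=
  fun x => (A x /\ ~ B x) \/ (B x /\ ~ A x).
Definition fullset {X : Type} : X -> Prop := fun _ => True.

Definition is_metric {X : Type} (d : X -> X -> R) : Prop :=
  (forall x y, 0 <= d x y) /\
  (forall x y, d x y = 0 <-> x = y) /\
  (forall x y, d x y = d y x) /\
  (forall x y z, d x z <= d x y + d y z).

Definition metric_open {X : Type} (d : X -> X -> R) (U : X -> Prop) : Prop :=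
  forall x, U x -> exists eps, 0 < eps /\ forall y, d x y < eps -> U y.

Definition metric_complete {X : Type} (d : X -> X -> R) : Prop :=
  forall u : nat -> X,
    (forall eps, 0 < eps -> exists N, forall m n, (N <= m)%nat -> (N <= n)%nat -> d (u m) (u n) < eps) ->
    exists l, forall eps, 0 < eps -> exists N, forall n, (N <= n)%nat -> d (u n) l < eps.

(* separable: has a countable dense subset (the empty set if X is empty) *)
Definition metric_separable {X : Type} (d : X -> X -> R) : Prop :=
  (forall x : X, False) \/
  exists e : nat -> X, forall x eps, 0 < eps -> exists n, d x (e n) < eps.

Definition polish {X : Type} (op : (X -> Prop) -> Prop) : Prop :=
  exists d : X -> X -> R, is_metric d /\ metric_complete d /\ metric_separable d /\
    forall U, op U <-> metric_open d U.

Definition is_base {X : Type} (op : (X -> Prop) -> Prop) (B : (X -> Prop) -> Prop) : Prop :=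
  (forall V, B V -> op V) /\
  (forall U, op U -> forall x, U x -> exists V, B V /\ V x /\ subset V U).

Definition countable_family {X : Type} (B : (X -> Prop) -> Prop) : Prop :=
  exists e : nat -> (X -> Prop), forall U, B U <-> exists n, U = e n.

Inductive borel {X : Type} (op : (X -> Prop) -> Prop) : (X -> Prop) -> Prop :=
  | borel_open : forall U, op U -> borel op U
  | borel_compl : forall A, borel op A -> borel op (fun x => ~ A x)
  | borel_union : forall A : nat -> (X -> Prop),
      (forall n, borel op (A n)) -> borel op (fun x => exists n, A n x).

Definition closure {X : Type} (op : (X -> Prop) -> Prop) (A : X -> Prop) : X -> Prop :=
  fun x => forall U, op U -> U x -> exists y, U y /\ A y.
Definition interior {X : Type} (op : (X -> Prop) -> Prop) (A : X -> Prop) : X -> Prop :=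
  fun x => exists U, op U /\ U x /\ subset U A.
Definition nowhere_dense {X : Type} (op : (X -> Prop) -> Prop) (A : X -> Prop) : Prop :=
  forall x, ~ interior op (closure op A) x.
Definition meager {X : Type} (op : (X -> Prop) -> Prop) (A : X -> Prop) : Prop :=
  exists N : nat -> (X -> Prop), (forall n, nowhere_dense op (N n)) /\
    subset A (fun x => exists n, N n x).
Definition baire_property {X : Type} (op : (X -> Prop) -> Prop) (A : X -> Prop) : Prop :=
  exists U, op U /\ meager op (symdiff A U).

Definition borel_hull_op {X : Type} (op : (X -> Prop) -> Prop)
    (F : (X -> Prop) -> Prop) (psi : (X -> Prop) -> (X -> Prop)) : Prop :=
  forall A, F A -> subset A (psi A) /\ borel op (psi A) /\ meager op (setminus (psi A) A).

Definition monotone_on {X : Type} (F : (X -> Prop) -> Prop)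
    (psi : (X -> Prop) -> (X -> Prop)) : Prop :=
  forall A1 A2, F A1 -> F A2 -> subset A1 A2 -> subset (psi A1) (psi A2).

Definition B_regular {X : Type} (op : (X -> Prop) -> Prop) (B : (X -> Prop) -> Prop)
    (phi : (X -> Prop) -> (X -> Prop)) : Prop :=
  forall A U, meager op A -> B U -> subset (inter (phi A) U) (phi (inter A U)).

From Stdlib Require Import Reals Classical FunctionalExtensionality PropExtensionality
  IndefiniteDescription Cantor.

(* Fix an enumeration [e] of the countable base B.
   - (i) => (ii): regularize a hull [phi] by
       reg phi A = { x | for all n, x in e n -> x in phi (A ∩ e n) };
     this is a countable intersection of Borel sets, lies below [phi A] because
     [X = e k] for some k, and is B-regular because B is closed under ∩.
   - (ii) => (iii): for a Baire set A let O(A) be the union of the basic open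
     sets in which A is comeager.  Then O(A) \ A and A \ O(A) are meager, and
       psi A = cl O(A) ∪ phi (A \ cl O(A))
     is a monotone Borel hull on Baire sets; monotonicity of the second part
     is exactly where B-regularity of [phi] is used.
   - (iii) => (i) and (ii) => (i): restrict to the smaller family. *)

Section BorelSets.
Variables (X : Type) (op : (X -> Prop) -> Prop).

Lemma borel_ext (A A' : X -> Prop) :
  (forall x, A x <-> A' x) -> borel op A -> borel op A'.
Proof.
  intros HAA' HA. replace A' with A; [exact HA|].
  apply functional_extensionality; intro x; apply propositional_extensionality, HAA'.
Qed.

Lemma borel_countable_inter (C : nat -> X -> Prop) :
  (forall n, borel op (C n)) -> borel op (fun x => forall n, C n x).
Proof.
  intros HC.
  apply borel_ext with (A := fun x => ~ (exists n, ~ C n x)).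
  - intros x; split.
    + intros Hnot n. apply NNPP; intro HnC; apply Hnot; eauto.
    + intros Hall [n HnC]; auto.
  - apply borel_compl, borel_union. intros n; apply borel_compl, HC.
Qed.

Lemma borel_union2 (A1 A2 : X -> Prop) :
  borel op A1 -> borel op A2 -> borel op (fun x => A1 x \/ A2 x).
Proof.
  intros H1 H2.
  apply borel_ext with (A := fun x => exists n, (match n with O => A1 | S _ => A2 end) x).
  - intros x; split.
    + intros [[|n] Hn]; auto.
    + intros [Hx|Hx]; [exists O | exists (S O)]; auto.
  - apply borel_union. intros [|n]; auto.
Qed.

End BorelSets.

Section MeagerIdeal.
Variables (X : Type) (op : (X -> Prop) -> Prop).

Lemma meager_subset (A A' : X -> Prop) : subset A A' -> meager op A' -> meager op A.
Proof.
  intros HAA' [N [HN Hcover]]. exists N; split; auto.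
  intros x Ax; apply Hcover, HAA', Ax.
Qed.

Lemma meager_empty : meager op (fun _ : X => False).
Proof.
  exists (fun _ _ => False). split.
  - intros n x [U [HU [Ux HUcl]]]. destruct (HUcl x Ux U HU Ux) as [y [_ []]].
  - intros x [].
Qed.

(* The meager sets form a sigma-ideal: choose covers and re-index N x N by N. *)
Lemma meager_countable_union (C : nat -> X -> Prop) :
  (forall k, meager op (C k)) -> meager op (fun x => exists k, C k x).
Proof.
  intros HC.
  destruct (functional_choice (fun k N => (forall n, nowhere_dense op (N n)) /\
     subset (C k) (fun x => exists n, N n x)) HC) as [N HN].
  exists (fun n => let (k, m) := of_nat n in N k m). split.
  - intros n. destruct (of_nat n) as [k m]. apply HN.
  - intros x [k Hk]. destruct (proj2 (HN k) x Hk) as [m Hm].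
    exists (to_nat (k, m)). rewrite cancel_of_to. exact Hm.
Qed.

Lemma meager_union2 (A1 A2 : X -> Prop) :
  meager op A1 -> meager op A2 -> meager op (fun x => A1 x \/ A2 x).
Proof.
  intros H1 H2.
  apply meager_subset with (A' := fun x => exists n, (match n with O => A1 | S _ => A2 end) x).
  - intros x [Hx|Hx]; [exists O | exists (S O)]; auto.
  - apply meager_countable_union. intros [|n]; auto.
Qed.

Lemma meager_inter (A U : X -> Prop) : meager op A -> meager op (inter A U).
Proof. apply meager_subset. intros x [Ax _]; exact Ax. Qed.

End MeagerIdeal.

Lemma borel_hull_op_restrict (X : Type) (op : (X -> Prop) -> Prop)
    (F G : (X -> Prop) -> Prop) (psi : (X -> Prop) -> X -> Prop) :
  (forall A, F A -> G A) ->
  borel_hull_op op G psi /\ monotone_on G psi ->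
  borel_hull_op op F psi /\ monotone_on F psi.
Proof.
  intros HFG [Hhull Hmono]. split.
  - intros A HA; apply Hhull, HFG, HA.
  - intros A1 A2 H1 H2; apply Hmono; apply HFG; assumption.
Qed.

(* The open sets of a Polish space are determined locally and closed under
   binary intersections; these are the only topological facts used below. *)
Lemma polish_open_local (X : Type) (op : (X -> Prop) -> Prop) : polish op ->
  forall W, (forall x, W x -> exists U, op U /\ U x /\ subset U W) -> op W.
Proof.
  intros [d [_ [_ [_ Hop]]]] W HW. apply Hop. intros x Wx.
  destruct (HW x Wx) as [U [HU [Ux HUW]]]. apply Hop in HU.
  destruct (HU x Ux) as [eps [Heps Hball]]. exists eps; split; auto.
Qed.

Lemma polish_open_inter (X : Type) (op : (X -> Prop) -> Prop) : polish op ->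
  forall U V, op U -> op V -> op (inter U V).
Proof.
  intros [d [_ [_ [_ Hop]]]] U V HU HV. apply Hop. intros x [Ux Vx].
  apply Hop in HU; apply Hop in HV.
  destruct (HU x Ux) as [e1 [He1 H1]]. destruct (HV x Vx) as [e2 [He2 H2]].
  exists (Rmin e1 e2). split.
  - apply Rmin_pos; auto.
  - intros y Hy. split.
    + apply H1. apply Rlt_le_trans with (1 := Hy), Rmin_l.
    + apply H2. apply Rlt_le_trans with (1 := Hy), Rmin_r.
Qed.

Section Closures.
Variables (X : Type) (op : (X -> Prop) -> Prop).
Hypothesis open_local :
  forall W : X -> Prop, (forall x, W x -> exists U, op U /\ U x /\ subset U W) -> op W.
Hypothesis open_inter : forall U V : X -> Prop, op U -> op V -> op (inter U V).

Lemma subset_closure (A : X -> Prop) : subset A (closure op A).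
Proof. intros x Ax U HU Ux. eauto. Qed.

Lemma closure_monotone (A A' : X -> Prop) :
  subset A A' -> subset (closure op A) (closure op A').
Proof.
  intros HAA' x Hx U HU Ux. destruct (Hx U HU Ux) as [y [Uy Ay]]. eauto.
Qed.

Lemma not_closure (A : X -> Prop) (x : X) : ~ closure op A x ->
  exists U, op U /\ U x /\ forall y, U y -> ~ A y.
Proof.
  intros Hx. apply not_all_ex_not in Hx. destruct Hx as [U HU].
  exists U.
  destruct (classic (op U)) as [Uop|Uop]; [|exfalso; apply HU; intros; contradiction].
  destruct (classic (U x)) as [Ux|Ux]; [|exfalso; apply HU; intros; contradiction].
  repeat split; auto. intros y Uy Ay. apply HU. intros _ _. eauto.
Qed.

Lemma open_empty : op (fun _ : X => False).
Proof. apply open_local. intros x []. Qed.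

Lemma closure_complement_open (A : X -> Prop) : op (fun x => ~ closure op A x).
Proof.
  apply open_local. intros x Hx. destruct (not_closure A x Hx) as [U [HU [Ux HUA]]].
  exists U. repeat split; auto. intros y Uy Hy.
  destruct (Hy U HU Uy) as [z [Uz Az]]. apply (HUA z Uz Az).
Qed.

Lemma borel_closure (A : X -> Prop) : borel op (closure op A).
Proof.
  apply borel_ext with (A := fun x => ~ ~ closure op A x).
  - intros x; split; [apply NNPP | auto].
  - apply borel_compl, borel_open, closure_complement_open.
Qed.

Lemma boundary_nowhere_dense (O : X -> Prop) : op O ->
  nowhere_dense op (setminus (closure op O) O).
Proof.
  intros HO x [U [HU [Ux HUcl]]].
  destruct (HUcl x Ux U HU Ux) as [y [Uy [Cy _]]].
  destruct (Cy U HU Uy) as [z [Uz Oz]].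
  destruct (HUcl z Uz (inter U O) (open_inter U O HU HO) (conj Uz Oz))
    as [w [[_ Ow] [_ nOw]]].
  contradiction.
Qed.

Lemma meager_baire_property (A : X -> Prop) : meager op A -> baire_property op A.
Proof.
  intros HA. exists (fun _ => False). split; [apply open_empty|].
  apply meager_subset with (A' := A); auto. intros x [[Ax _]|[[] _]]; auto.
Qed.

End Closures.

Section Regularization.
Variables (X : Type) (op : (X -> Prop) -> Prop) (B : (X -> Prop) -> Prop).
Variable e : nat -> X -> Prop.
Hypothesis e_enum : forall U, B U <-> exists n, U = e n.
Hypothesis B_open : forall U, B U -> op U.
Hypothesis B_inter : forall U V, B U -> B V -> B (inter U V).
Hypothesis B_full : B fullset.
Variable phi : (X -> Prop) -> X -> Prop.
Hypothesis phi_hull : borel_hull_op op (meager op) phi.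
Hypothesis phi_mono : monotone_on (meager op) phi.

Let e_in_B (n : nat) : B (e n) := proj2 (e_enum (e n)) (ex_intro _ n eq_refl).

Definition regularize (A : X -> Prop) : X -> Prop :=
  fun x => forall n, e n x -> phi (inter A (e n)) x.

Lemma regularize_hull : borel_hull_op op (meager op) regularize.
Proof.
  intros A HA. split; [|split].
  - intros x Ax n Hn. apply (phi_hull _ (meager_inter _ _ A (e n) HA)). split; auto.
  - apply borel_ext with (A := fun x => forall n, ~ e n x \/ phi (inter A (e n)) x).
    + intros x; split.
      * intros Hx n Hn. destruct (Hx n); [contradiction | assumption].
      * intros Hx n. destruct (classic (e n x)); auto.
    + apply borel_countable_inter. intros n. apply borel_union2.
      * apply borel_compl, borel_open, B_open, e_in_B.
      * apply (phi_hull _ (meager_inter _ _ A (e n) HA)).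
  - (* the whole space is some e k, so regularize A lies inside phi A *)
    destruct (proj1 (e_enum _) B_full) as [k Hk].
    apply meager_subset with (A' := setminus (phi A) A); [|apply phi_hull, HA].
    intros x [Hx nAx]. split; auto.
    assert (ek : e k x) by (rewrite <- Hk; exact I).
    apply (phi_mono (inter A (e k)) A (meager_inter _ _ A _ HA) HA); auto.
    intros y [Ay _]; exact Ay.
Qed.

Lemma regularize_monotone : monotone_on (meager op) regularize.
Proof.
  intros A1 A2 H1 H2 H12 x Hx n Hn.
  apply (phi_mono (inter A1 (e n)) (inter A2 (e n))
           (meager_inter _ _ _ _ H1) (meager_inter _ _ _ _ H2)); auto.
  intros y [Ay ey]; split; auto.
Qed.

(* For x in e m ∩ e n = e k, use phi (A ∩ e k) ⊆ phi ((A ∩ e m) ∩ e n). *)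
Lemma regularize_B_regular : B_regular op B regularize.
Proof.
  intros A U HA HU x [Hx Ux] n Hn.
  destruct (proj1 (e_enum _) HU) as [m Hm]. subst U.
  destruct (proj1 (e_enum _) (B_inter _ _ (e_in_B m) (e_in_B n))) as [k Hk].
  assert (ek : e k x) by (rewrite <- Hk; split; auto).
  apply (phi_mono (inter A (e k)) (inter (inter A (e m)) (e n))
           (meager_inter _ _ _ _ HA) (meager_inter _ _ _ _ (meager_inter _ _ _ _ HA)));
    auto.
  intros y [Ay eky]. rewrite <- Hk in eky. destruct eky. repeat split; auto.
Qed.

End Regularization.

Section BaireExtension.
Variables (X : Type) (op : (X -> Prop) -> Prop) (B : (X -> Prop) -> Prop).
Hypothesis open_local :
  forall W : X -> Prop, (forall x, W x -> exists U, op U /\ U x /\ subset U W) -> op W.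
Hypothesis open_inter : forall U V : X -> Prop, op U -> op V -> op (inter U V).
Hypothesis B_base : is_base op B.
Variable e : nat -> X -> Prop.
Hypothesis e_enum : forall U, B U <-> exists n, U = e n.
Variable phi : (X -> Prop) -> X -> Prop.
Hypothesis phi_hull : borel_hull_op op (meager op) phi.
Hypothesis phi_mono : monotone_on (meager op) phi.
Hypothesis phi_regular : B_regular op B phi.

Let e_open (n : nat) : op (e n) :=
  proj1 B_base _ (proj2 (e_enum (e n)) (ex_intro _ n eq_refl)).

Definition comeager_part (A : X -> Prop) : X -> Prop :=
  fun x => exists n, e n x /\ meager op (setminus (e n) A).

Lemma comeager_part_open (A : X -> Prop) : op (comeager_part A).
Proof.
  apply open_local. intros x [n [Hn Hmn]].
  exists (e n). split; [apply e_open|split; [exact Hn|]].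
  intros y Hy. exists n; auto.
Qed.

Lemma comeager_part_monotone (A1 A2 : X -> Prop) :
  subset A1 A2 -> subset (comeager_part A1) (comeager_part A2).
Proof.
  intros H12 x [n [Hn Hmn]]. exists n. split; auto.
  apply meager_subset with (A' := setminus (e n) A1); auto.
  intros y [ey nA2y]. split; auto.
Qed.

(* O(A) \ A is covered by the countably many meager sets e n \ A. *)
Lemma comeager_part_minus_meager (A : X -> Prop) :
  meager op (setminus (comeager_part A) A).
Proof.
  apply meager_subset with (A' := fun x => exists n,
     meager op (setminus (e n) A) /\ setminus (e n) A x).
  - intros x [[n [Hn Hmn]] nAx]. exists n. split; auto. split; auto.
  - apply meager_countable_union. intros n.
    destruct (classic (meager op (setminus (e n) A))) as [Hm|Hm].
    + apply meager_subset with (A' := setminus (e n) A); auto. intros x [_ Hx]; exact Hx.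
    + apply meager_subset with (A' := fun _ => False); [|apply meager_empty].
      intros x [Hx _]; auto.
Qed.

(* If A =* V with V open, then V ⊆ O(A), hence A \ O(A) ⊆ A Δ V is meager. *)
Lemma minus_comeager_part_meager (A : X -> Prop) :
  baire_property op A -> meager op (setminus A (comeager_part A)).
Proof.
  intros [V [HV Hsym]].
  assert (VO : subset V (comeager_part A)).
  { intros x Vx. destruct (proj2 B_base V HV x Vx) as [W [HW [Wx WV]]].
    destruct (proj1 (e_enum W) HW) as [n Hn]. subst W. exists n. split; auto.
    apply meager_subset with (A' := symdiff A V); auto.
    intros y [ey nAy]. right; split; auto. }
  apply meager_subset with (A' := symdiff A V); auto.
  intros y [Ay nOy]. left; split; auto.
Qed.

Definition meager_remainder (A : X -> Prop) : X -> Prop :=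
  setminus A (closure op (comeager_part A)).

Lemma meager_remainder_meager (A : X -> Prop) :
  baire_property op A -> meager op (meager_remainder A).
Proof.
  intros HA. apply meager_subset with (A' := setminus A (comeager_part A));
    [|apply minus_comeager_part_meager, HA].
  intros x [Ax nCx]. split; auto. intro Ox; apply nCx, subset_closure, Ox.
Qed.

Definition baire_hull (A : X -> Prop) : X -> Prop :=
  fun x => closure op (comeager_part A) x \/ phi (meager_remainder A) x.

Lemma baire_hull_is_hull : borel_hull_op op (baire_property op) baire_hull.
Proof.
  intros A HA. pose proof (meager_remainder_meager A HA) as Hrem.
  set (O := comeager_part A).
  split; [|split].
  - intros x Ax. destruct (classic (closure op O x)) as [Cx|Cx]; [left; exact Cx|].
    right. apply (phi_hull _ Hrem). split; auto.
  - apply borel_union2; [apply borel_closure, open_local | apply (phi_hull _ Hrem)].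
  - (* psi A \ A ⊆ (O \ A) ∪ (cl O \ O) ∪ (phi(R) \ R) with R the remainder *)
    apply meager_subset with (A' := fun x =>
         (setminus O A x \/ setminus (closure op O) O x) \/
          setminus (phi (meager_remainder A)) (meager_remainder A) x).
    + intros x [[Cx|Px] nAx].
      * left. destruct (classic (O x)); [left|right]; split; auto.
      * right. split; auto. intros [Ax _]; auto.
    + apply meager_union2; [apply meager_union2|].
      * apply comeager_part_minus_meager.
      * exists (fun _ => setminus (closure op O) O). split.
        -- intros _. apply boundary_nowhere_dense, comeager_part_open; assumption.
        -- intros x Hx. exists 0%nat; exact Hx.
      * apply (phi_hull _ Hrem).
Qed.

(* If x ∉ cl O(A2), pick a basic W ∋ x missing O(A2); then by regularity
   phi(R1) ∩ W ⊆ phi(R1 ∩ W) ⊆ phi(R2), since R1 ∩ W ⊆ A2 \ cl O(A2). *)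
Lemma baire_hull_monotone : monotone_on (baire_property op) baire_hull.
Proof.
  intros A1 A2 H1 H2 H12 x [Cx|Px].
  - left. apply (closure_monotone X op (comeager_part A1)); auto.
    apply comeager_part_monotone, H12.
  - destruct (classic (closure op (comeager_part A2) x)) as [Cx|Cx]; [left; exact Cx|right].
    destruct (not_closure _ _ _ x Cx) as [U [HU [Ux HUO]]].
    destruct (proj2 B_base U HU x Ux) as [W [HW [Wx WU]]].
    pose proof (meager_remainder_meager _ H1) as R1.
    apply (phi_mono _ _ (meager_inter _ _ _ W R1) (meager_remainder_meager _ H2)).
    + intros y [[A1y _] Wy]. split; auto.
      intros Cy. destruct (Cy W (proj1 B_base W HW) Wy) as [z [Wz Oz]].
      apply (HUO z (WU z Wz) Oz).
    + apply (phi_regular _ W R1 HW). split; auto.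
Qed.

End BaireExtension.

Theorem theorem3p2 (X : Type) (op : (X -> Prop) -> Prop) (B : (X -> Prop) -> Prop)
  (HX : polish op)
  (HBbase : is_base op B) (HBcount : countable_family B)
  (HBinter : forall U V, B U -> B V -> B (inter U V))
  (HBfull : B fullset) :
  ((exists phi, borel_hull_op op (meager op) phi /\ monotone_on (meager op) phi) <->
   (exists phi, borel_hull_op op (meager op) phi /\ monotone_on (meager op) phi /\
                B_regular op B phi)) /\
  ((exists phi, borel_hull_op op (meager op) phi /\ monotone_on (meager op) phi /\
                B_regular op B phi) <->
   (exists psi, borel_hull_op op (baire_property op) psi /\
                monotone_on (baire_property op) psi)).
Proof.
  destruct HBcount as [e He].
  pose proof (polish_open_local X op HX) as Hlocal.
  pose proof (polish_open_inter X op HX) as Hinter.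
  pose proof (proj1 HBbase) as HBopen.
  assert (i_to_ii : forall phi, borel_hull_op op (meager op) phi ->
            monotone_on (meager op) phi ->
            exists phi', borel_hull_op op (meager op) phi' /\
              monotone_on (meager op) phi' /\ B_regular op B phi').
  { intros phi Hh Hm. exists (regularize X e phi). split; [|split].
    - apply regularize_hull with (B := B); assumption.
    - apply regularize_monotone; assumption.
    - apply regularize_B_regular; assumption. }
  split; split.
  - intros [phi [Hh Hm]]. exact (i_to_ii phi Hh Hm).
  - intros [phi [Hh [Hm _]]]. eauto.
  - intros [phi [Hh [Hm Hr]]]. exists (baire_hull X op e phi). split.
    + apply baire_hull_is_hull with (B := B); assumption.
    + apply baire_hull_monotone with (B := B); assumption.
  - intros [psi Hpsi].
    destruct (borel_hull_op_restrict X op (meager op) (baire_property op) psi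
                (meager_baire_property X op Hlocal) Hpsi) as [Hh Hm].
    exact (i_to_ii psi Hh Hm).
Qed.
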